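(* Let $(\mathcal{X},\mathfrak{X})$ and $(\mathcal{Y},\mathfrak{Y})$ be measurable spaces, let $\mu$ be a finite measure on $(\mathcal{X}\times\mathcal{Y},\mathfrak{X}\times\mathfrak{Y})$, let $f$ be a real-valued $\mu$-integrable function, and let $\nu$ be a finite measure on the same space with $\nu\ll\mu$. Then for every $\epsilon>0$ there exist a finite sub-$\sigma$-algebra $\mathfrak{C}$ of $\mathfrak{X}$ and a finite sub-$\sigma$-algebra $\mathfrak{D}$ of $\mathfrak{Y}$ such that \[ \nu\{|\mu^{\mathfrak{F}}f-f|\ge\epsilon\}<\epsilon \] for every $\sigma$-algebra $\mathfrak{F}$ with $\mathfrak{C}\times\mathfrak{D}\subseteq\mathfrak{F}\subseteq\mathfrak{X}\times\mathfrak{Y}$.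
   Context: For a finite measure $\lambda$ on $(\mathcal{Z},\mathfrak{Z})$, a $\lambda$-integrable $f$ and a sub-$\sigma$-algebra $\mathfrak{F}$, $\lambda^{\mathfrak{F}}f$ denotes the Radon–Nikodym derivative $\mathrm{d}(f\cdot\lambda)|_{\mathfrak{F}}/\mathrm{d}\lambda|_{\mathfrak{F}}$, where $(f\cdot\lambda)(A)=\int_A f\,\mathrm{d}\lambda$. $\mathfrak{C}\times\mathfrak{D}$ denotes the product $\sigma$-algebra. *)

From HB Require Import structures.
From mathcomp Require Import all_boot all_order all_algebra.
From mathcomp Require Import all_classical all_reals all_analysis.
Set Implicit Arguments. Unset Strict Implicit. Unset Printing Implicit Defensive.
Import Order.TTheory GRing.Theory Num.Theory.
Local Open Scope classical_set_scope.
Local Open Scope ring_scope.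

Definition finite_sub_sigma_algebra {d} {T : measurableType d}
  (C : set (set T)) : Prop :=
  [/\ sigma_algebra setT C, C `<=` measurable & finite_set C].

Definition prod_sigma {X Y : Type} (C : set (set X)) (D : set (set Y))
  : set (set (X * Y)) :=
  <<s [set A `*` B | A in C & B in D] >>.

Definition F_measurable_fun {T : Type} {R : realType} (F : set (set T))
  (g : T -> R) : Prop :=
  forall B : set R, measurable B -> F (g @^-1` B).

(* g is (a version of) lambda^F f = d(f.lambda)|F / d(lambda|F): g is
   F-measurable, lambda-integrable, and has the same integrals as f on every
   set of F. *)
Definition is_cond_exp {d} {T : measurableType d} {R : realType}
  (lam : {measure set T -> \bar R}) (F : set (set T)) (f g : T -> R) : Prop :=
  [/\ F_measurable_fun F g,
      lam.-integrable setT (EFin \o g) &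
      forall A, F A ->
        (\int[lam]_(x in A) (g x)%:E = \int[lam]_(x in A) (f x)%:E)%E].

From HB Require Import structures.
From mathcomp Require Import all_boot all_order all_algebra.
From mathcomp Require Import all_classical all_reals all_analysis.
From mathcomp Require Import measurable_realfun.
Import Order.TTheory GRing.Theory Num.Theory.
Import HBSimple.
Local Open Scope classical_set_scope.
Local Open Scope ring_scope.

(* A Dynkin argument shows that every integrable f on X * Y is L1-close to a
   function h measurable for C x D, where C and D are generated by finitely
   many measurable sets (hence finite).  The conditional expectation g of f
   w.r.t. any F containing C x D satisfies int |g - h| <= int |f - h| (split
   the integral along the F-set {h <= g}), so int |g - f| <= 2 int |f - h|.
   Markov's inequality makes mu {eps <= |g - f|} small, and absolute
   continuity transfers this to nu. *)

Lemma finite_g_sigma_seq {T : Type} (s : seq (set T)) : finite_set <<s [set` s]>>.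
Proof.
pose n := size s.
(* a set of the generated sigma-algebra is a union of atoms, and the atom of x
   is determined by which generators contain x *)
pose atom (x : T) : {ffun 'I_n -> bool} := [ffun i : 'I_n => `[< nth set0 s i x >]].
pose K := [set atom @^-1` [set t | t \in S] | S in [set: {set {ffun 'I_n -> bool}}]].
apply: (@sub_finite_set _ _ K); last exact/finite_image/finite_finset.
apply: smallest_sub.
- split.
  + exists (finset (fun _ => false)) => //; apply/seteqP; split => x //=; by rewrite inE.
  + move=> _ [S _ <-]; exists (~: S)%SET => //; apply/seteqP; split=> x /=.
    * by rewrite finset.in_setC => /negP.
    * by move=> [_ /negP]; rewrite finset.in_setC.
  + move=> A KA.
    have /choice[S SA] : forall k, exists S : {set {ffun 'I_n -> bool}},
        atom @^-1` [set t | t \in S] = A k.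
      by move=> k; have [S _ <-] := KA k; exists S.
    exists (finset (fun t => `[< exists k, t \in S k >])) => //.
    apply/seteqP; split => x /=; rewrite inE.
    * by move=> /asboolP [k hk]; exists k => //; rewrite -SA.
    * by move=> [k _]; rewrite -SA /= => hk; apply/asboolP; exists k.
- move=> A /= As.
  have As' : (index A s < n)%N by rewrite index_mem.
  exists (finset (fun t : {ffun 'I_n -> bool} => t (Ordinal As'))) => //.
  apply/seteqP; split => x /=; rewrite inE ffunE /= nth_index //; by move/asboolP.
Qed.

Lemma finite_sub_sigma_algebra_seq {d} {T : measurableType d} (s : seq (set T)) :
  [set` s] `<=` measurable -> finite_sub_sigma_algebra <<s [set` s]>>.
Proof.
move=> sm; split; [exact: smallest_sigma_algebra | | exact: finite_g_sigma_seq].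
by apply: smallest_sub => //; exact: sigma_algebra_measurable.
Qed.

Section F_measurable_fun.
Context {R : realType}.

Lemma F_measurable_funP {T : pointedType} {F : set (set T)} {h : T -> R} :
  sigma_algebra setT F ->
  F_measurable_fun F h <-> measurable_fun (setT : set (g_sigma_algebraType F)) h.
Proof.
move=> sF; split.
- move=> Fh _ B mB; rewrite setTI /= measurable_g_measurableTypeE //; exact: Fh.
- move=> mh B mB; have := mh measurableT B mB.
  by rewrite setTI /= measurable_g_measurableTypeE.
Qed.

Lemma F_measurable_funS {T : Type} {F1 F2 : set (set T)} {h : T -> R} :
  F1 `<=` F2 -> F_measurable_fun F1 h -> F_measurable_fun F2 h.
Proof. by move=> sF Fh B mB; apply/sF/Fh. Qed.

Lemma F_measurable_funD {T : pointedType} {F : set (set T)} {h1 h2 : T -> R} :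
  sigma_algebra setT F -> F_measurable_fun F h1 -> F_measurable_fun F h2 ->
  F_measurable_fun F (h1 \+ h2).
Proof.
move=> sF /(F_measurable_funP sF) m1 /(F_measurable_funP sF) m2.
by apply/(F_measurable_funP sF); exact: measurable_funD.
Qed.

Lemma F_measurable_funM {T : pointedType} {F : set (set T)} {c : R} {h : T -> R} :
  sigma_algebra setT F -> F_measurable_fun F h ->
  F_measurable_fun F (fun x => c * h x).
Proof.
move=> sF /(F_measurable_funP sF) m.
by apply/(F_measurable_funP sF); exact: measurable_funM.
Qed.

Lemma F_measurable_fun_indic {T : pointedType} {F : set (set T)} {U : set T} :
  sigma_algebra setT F -> F U -> F_measurable_fun F (\1_U : T -> R).
Proof.
move=> sF FU; apply/(F_measurable_funP sF); apply: measurable_indic.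
by rewrite /= measurable_g_measurableTypeE.
Qed.

Lemma F_measurable_fun_measurable {d} {T : measurableType d}
    {F : set (set T)} {h : T -> R} :
  F `<=` measurable -> F_measurable_fun F h -> measurable_fun setT h.
Proof. by move=> sF Fh _ B mB; rewrite setTI; apply/sF/Fh. Qed.

End F_measurable_fun.

Section prod_sigma.
Context {d1 d2} {X : measurableType d1} {Y : measurableType d2}.

Lemma prod_sigmaS (C1 C2 : set (set X)) (D1 D2 : set (set Y)) :
  C1 `<=` C2 -> D1 `<=` D2 -> prod_sigma C1 D1 `<=` prod_sigma C2 D2.
Proof.
move=> sC sD; apply: smallest_sub; first exact: smallest_sigma_algebra.
move=> _ [A CA] [B DB] <-; apply: sub_sigma_algebra.
by exists A; [exact: sC | exists B => //; exact: sD].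
Qed.

Lemma prod_sigma_measurable (C : set (set X)) (D : set (set Y)) :
  C `<=` measurable -> D `<=` measurable ->
  prod_sigma C D `<=` (measurable : set (set (X * Y))).
Proof.
move=> sC sD; apply: smallest_sub; first exact: sigma_algebra_measurable.
by move=> _ [A CA] [B DB] <-; apply: measurableX; [exact: sC | exact: sD].
Qed.

(* Finite sub-sigma-algebras are handled through finite generating families,
   so that two of them are joined by concatenating the families. *)
Definition prod_sigma_seq (sx : seq (set X)) (sy : seq (set Y)) :=
  prod_sigma <<s [set` sx]>> <<s [set` sy]>>.

Lemma prod_sigma_seqS (sx sx' : seq (set X)) (sy sy' : seq (set Y)) :
  {subset sx <= sx'} -> {subset sy <= sy'} ->
  prod_sigma_seq sx sy `<=` prod_sigma_seq sx' sy'.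
Proof.
move=> sxx syy; apply: prod_sigmaS; apply: sub_smallest2r => //;
  by [exact: smallest_sigma_algebra | move=> A /= /sxx | move=> A /= /syy].
Qed.

Lemma prod_sigma_seq_measurable {sx : seq (set X)} {sy : seq (set Y)} :
  [set` sx] `<=` measurable -> [set` sy] `<=` measurable ->
  prod_sigma_seq sx sy `<=` measurable.
Proof.
move=> sxm sym; apply: prod_sigma_measurable;
  by apply: smallest_sub => //; exact: sigma_algebra_measurable.
Qed.

End prod_sigma.

Lemma sum_indic_trivIset {T : Type} {R : pzRingType} (F : nat -> set T) n x :
  trivIset setT F ->
  \sum_(k < n) \1_(F k) x = \1_(\bigcup_(k < n) F k) x :> R.
Proof.
move=> tF.
have [[k kn Fkx]|nF] := pselect (exists2 k, (k < n)%N & F k x).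
- rewrite (bigD1 (Ordinal kn)) //= indicE mem_set // big1 ?addr0.
    by rewrite indicE mem_set //; exists k.
  move=> j /eqP jk; rewrite indicE memNset // => Fjx.
  have jk' : nat_of_ord j != k by apply/eqP => e; apply: jk; apply: val_inj.
  move/trivIsetP : tF => /(_ j k Logic.I Logic.I jk') /seteqP [+ _].
  by move=> /(_ x (conj Fjx Fkx)).
- rewrite big1; first by rewrite indicE memNset // => -[k /= kn Fkx]; apply: nF; exists k.
  by move=> j _; rewrite indicE memNset // => Fjx; apply: nF; exists j.
Qed.

Lemma normr_indicB {T : Type} {R : numDomainType} (A B : set T) x : B `<=` A ->
  `|\1_A x - \1_B x| = \1_(A `\` B) x :> R.
Proof.
move=> BA; rewrite !indicE in_setD.
have [xB|xB] := boolP (x \in B); last by rewrite subr0 andbT normr_nat.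
by rewrite (mem_set (BA _ (set_mem xB))) subrr normr0.
Qed.

Section integral_lemmas.
Context {d} {T : measurableType d} {R : realType}.
Local Open Scope ereal_scope.

Lemma measurable_fun_abse_EFin (D : set T) {u : T -> R} :
  measurable_fun setT u -> measurable_fun D (fun x => `|(u x)%:E|).
Proof.
move=> mu_; apply: measurable_funTS.
by apply: measurableT_comp => //; apply/measurable_EFinP.
Qed.

Lemma integral_abs_addr_le (mu : {measure set T -> \bar R}) {u v : T -> R} :
  measurable_fun setT u -> measurable_fun setT v ->
  \int[mu]_x `|(u x + v x)%:E| <= \int[mu]_x `|(u x)%:E| + \int[mu]_x `|(v x)%:E|.
Proof.
move=> mu_ mv; rewrite -ge0_integralD //; try exact: measurable_fun_abse_EFin.
apply: ge0_le_integral => //.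
- by apply: measurable_fun_abse_EFin; exact: measurable_funD.
- by apply: emeasurable_funD; exact: measurable_fun_abse_EFin.
- by move=> x _; rewrite EFinD; exact: lee_abs_add.
Qed.

Lemma integral_abs_subr_le (mu : {measure set T -> \bar R}) {u v w : T -> R} :
  measurable_fun setT u -> measurable_fun setT v -> measurable_fun setT w ->
  \int[mu]_x `|(u x - w x)%:E| <=
  \int[mu]_x `|(u x - v x)%:E| + \int[mu]_x `|(v x - w x)%:E|.
Proof.
move=> mu_ mv mw; rewrite (eq_integral (fun x => `|((u x - v x) + (v x - w x))%:E|)).
  by apply: integral_abs_addr_le; exact: measurable_funB.
by move=> x _; rewrite addrA subrK.
Qed.

Lemma integral_abs_subC (mu : {measure set T -> \bar R}) (D : set T) (u v : T -> R) :
  \int[mu]_(x in D) `|(u x - v x)%:E| = \int[mu]_(x in D) `|(v x - u x)%:E|.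
Proof. by apply: eq_integral => x _; rewrite !abse_EFin distrC. Qed.

Lemma integral_setB_EFin (mu : {measure set T -> \bar R}) (B : set T) (u v : T -> R) :
  measurable B -> mu.-integrable setT (EFin \o u) -> mu.-integrable setT (EFin \o v) ->
  \int[mu]_(x in B) (u x - v x)%:E =
  \int[mu]_(x in B) (u x)%:E - \int[mu]_(x in B) (v x)%:E.
Proof.
move=> mB iu iv; rewrite -integralB_EFin //;
  exact: (integrableS measurableT mB (@subsetT _ B)).
Qed.

Lemma measurable_abs_ge (u : T -> R) (eps : R) :
  measurable_fun setT u -> measurable [set x | (eps <= `|u x|)%R].
Proof.
move=> mu_; have /= := measurableT_comp (@normr_measurable _ _) mu_ measurableT
  (measurable_itv `[eps, +oo[%R).
by rewrite setTI; congr measurable; apply/seteqP; split => x /=; rewrite in_itv /= andbT.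
Qed.

Lemma markov_abs (mu : {measure set T -> \bar R}) {u : T -> R} {eps : R} :
  measurable_fun setT u -> (0 < eps)%R ->
  eps%:E * mu [set x | (eps <= `|u x|)%R] <= \int[mu]_x `|(u x)%:E|.
Proof.
move=> mu_ eps0.
have := @le_integral_comp_abse _ _ _ mu setT measurableT (EFin \o u) eps id
  (@measurable_id _ _ setT) (fun r r0 => r0) (fun x y _ _ xy => xy).
move=> /(_ (proj2 (measurable_EFinP _ _) mu_) eps0) /=.
suff -> : setT `&` [set x | eps%:E <= `|(u x)%:E|] = [set x | (eps <= `|u x|)%R] by [].
by apply/seteqP; split => x /=; rewrite ?abse_EFin lee_fin //; case.
Qed.

Lemma measure_bigcup_setD_lt (mu : {finite_measure set T -> \bar R})
    {F : (set T)^nat} {eta : R} :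
  (forall k, measurable (F k)) -> (0 < eta)%R ->
  exists N, mu (\bigcup_k F k `\` \bigcup_(k < N) F k) < eta%:E.
Proof.
move=> mF eta0.
pose E n := \bigcup_(k < n) F k.
have mE n : measurable (E n) by apply: bigcup_measurable.
have EU : \bigcup_n E n = \bigcup_k F k.
  apply/seteqP; split => x; first by move=> [n _ [k _ Fkx]]; exists k.
  by move=> [k _ Fkx]; exists k.+1 => //; exists k => /=.
have ndE : {homo E : n m / (n <= m)%N >-> (n <= m)%O}.
  move=> n m nm; rewrite subsetEset => x [k /= kn Fkx].
  by exists k => //=; exact: leq_trans kn nm.
have mU : measurable (\bigcup_k F k) by exact: bigcup_measurable.
have mEU : measurable (\bigcup_n E n) by rewrite EU.
have := nondecreasing_cvg_mu (mu := mu) mE mEU ndE; rewrite EU.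
rewrite -[X in _ --> X](fineK (fin_num_measure _ _ mU)) => /fine_cvgP[_].
move=> /cvgr_dist_lt/(_ _ eta0)[N _ /(_ N (leqnn N)) /= muN].
have EN_U : E N `<=` \bigcup_k F k by move=> y [k _ Fky]; exists k.
exists N; rewrite measureD //; try exact: mE; last by rewrite ltey_eq fin_num_measure.
rewrite setIidr // -(fineK (fin_num_measure _ _ mU)).
rewrite -(fineK (fin_num_measure _ _ (mE N))).
by rewrite -EFinB lte_fin; exact: le_lt_trans (ler_norm _) muN.
Qed.

End integral_lemmas.

Lemma dominates_eps_delta {d} {T : measurableType d} {R : realType}
    {mu : {measure set T -> \bar R}} {nu : {finite_measure set T -> \bar R}}
    {eps : R} :
  nu `<< mu -> 0 < eps ->
  exists2 del : R, 0 < del &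
    forall A, measurable A -> (mu A < del%:E)%E -> (nu A < eps%:E)%E.
Proof.
move=> numu eps0.
have [P [N PN]] := Hahn_decomposition (charge_of_finite_measure nu).
have [del [del0 small]] := charge_variation_continuous PN numu eps0.
exists del => // A mA muA.
apply: le_lt_trans (le_trans (lee_abs _) (abse_charge_variation PN mA)) (small A mA muA).
Qed.

Section cond_exp.
Context {d} {T : measurableType d} {R : realType}.
Variable mu : {measure set T -> \bar R}.
Local Open Scope ereal_scope.

Lemma cond_exp_L1_contraction {F : set (set T)} {f g h : T -> R} :
  sigma_algebra setT F -> F `<=` measurable ->
  mu.-integrable setT (EFin \o f) -> is_cond_exp mu F f g ->
  F_measurable_fun F h -> mu.-integrable setT (EFin \o h) ->
  \int[mu]_x `|(g x - h x)%:E| <= \int[mu]_x `|(f x - h x)%:E|.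
Proof.
move=> sF Fm intf [Fg intg Hg] Fh inth.
have mg := F_measurable_fun_measurable Fm Fg.
have mh := F_measurable_fun_measurable Fm Fh.
have mf : measurable_fun setT f by apply/measurable_EFinP; case/integrableP: intf.
pose A := (g \+ (fun x => -1 * h x))%R @^-1` `[0%R, +oo[.
have FA : F A.
  by apply: (F_measurable_funD sF Fg (F_measurable_funM sF Fh)); exact: measurable_itv.
have FAc : F (~` A) by rewrite -setTD; case: sF => _ + _; apply.
have mA := Fm _ FA; have mAc := Fm _ FAc.
rewrite -(setUv A) !ge0_integral_setU //; first last.
- by apply/disj_setPCl.
- by apply: measurable_fun_abse_EFin; exact: measurable_funB.
- by apply/disj_setPCl.
- by apply: measurable_fun_abse_EFin; exact: measurable_funB.
(* on A and on its complement, |g - h| has a constant sign and g may be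
   replaced by f in the integral *)
apply: leeD.
- rewrite (eq_integral (fun x => (g x - h x)%:E)); last first.
    move=> x /set_mem; rewrite /A /= in_itv /= andbT mulN1r => gh.
    by rewrite ?abse_EFin ger0_norm.
  rewrite integral_setB_EFin // Hg // -integral_setB_EFin //.
  apply: le_trans (lee_abs _) (le_abse_integral _ _ _) => //.
  by apply/measurable_EFinP/measurable_funTS/measurable_funB.
- rewrite (eq_integral (fun x => (h x - g x)%:E)); last first.
    move=> x /set_mem; rewrite /A /= in_itv /= andbT mulN1r => /negP.
    by rewrite -ltNge => gh; rewrite ?abse_EFin ltr0_norm // opprB.
  rewrite integral_setB_EFin // Hg // -integral_setB_EFin //.
  rewrite integral_abs_subC; apply: le_trans (lee_abs _) (le_abse_integral _ _ _) => //.
  by apply/measurable_EFinP/measurable_funTS/measurable_funB.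
Qed.

Lemma cond_exp_L1_dist {F : set (set T)} {f g h : T -> R} :
  sigma_algebra setT F -> F `<=` measurable ->
  mu.-integrable setT (EFin \o f) -> is_cond_exp mu F f g ->
  F_measurable_fun F h -> mu.-integrable setT (EFin \o h) ->
  \int[mu]_x `|(g x - f x)%:E| <=
  \int[mu]_x `|(f x - h x)%:E| + \int[mu]_x `|(f x - h x)%:E|.
Proof.
move=> sF Fm intf cg Fh inth.
have mf : measurable_fun setT f by apply/measurable_EFinP; case/integrableP: intf.
have mg : measurable_fun setT g.
  by case: cg => Fg _ _; exact: F_measurable_fun_measurable Fm Fg.
have mh := F_measurable_fun_measurable Fm Fh.
apply: le_trans (integral_abs_subr_le mu mg mh mf) _.
rewrite [X in _ + X]integral_abs_subC.
by apply: leeD => //; exact: (cond_exp_L1_contraction sF Fm intf cg Fh inth).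
Qed.

End cond_exp.

Section rect_approximation.
Context {R : realType} {d1 d2 : measure_display}
  {X : measurableType d1} {Y : measurableType d2}.
Variable mu : {finite_measure set (X * Y)%type -> \bar R}.
Local Open Scope ereal_scope.

Definition fin_rect_approx (f : X * Y -> R) : Prop :=
  measurable_fun setT f /\
  forall eta : R, (0 < eta)%R ->
  exists (sx : seq (set X)) (sy : seq (set Y)) (h : X * Y -> R),
    [/\ [set` sx] `<=` measurable, [set` sy] `<=` measurable,
        F_measurable_fun (prod_sigma_seq sx sy) h,
        mu.-integrable setT (EFin \o h) &
        \int[mu]_x `|(f x - h x)%:E| < eta%:E].

Lemma fin_rect_approx_indic (sx : seq (set X)) (sy : seq (set Y))
    (U : set (X * Y)) :
  [set` sx] `<=` measurable -> [set` sy] `<=` measurable ->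
  prod_sigma_seq sx sy U -> fin_rect_approx (\1_U).
Proof.
move=> sxm sym PU; have mU := prod_sigma_seq_measurable sxm sym _ PU.
split=> [|eta eta0]; first exact: measurable_indic.
exists sx, sy, (\1_U); split => //.
- exact: F_measurable_fun_indic (smallest_sigma_algebra _ _) PU.
- exact: integrable_indic.
- rewrite (eq_integral (cst 0)) ?integral0 ?lte_fin //.
  by move=> x _; rewrite subrr abse0.
Qed.

Lemma fin_rect_approx_rect A B : measurable A -> measurable B ->
  fin_rect_approx (\1_(A `*` B)).
Proof.
move=> mA mB; apply: (@fin_rect_approx_indic [:: A] [:: B]).
- by move=> C /=; rewrite inE => /eqP ->.
- by move=> C /=; rewrite inE => /eqP ->.
- apply: sub_sigma_algebra; exists A; first by apply: sub_sigma_algebra; exact: mem_head.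
  by exists B => //; apply: sub_sigma_algebra; exact: mem_head.
Qed.

Lemma fin_rect_approx0 : fin_rect_approx (fun _ => 0%R).
Proof.
have -> : (fun _ => 0%R) = \1_(set0 `*` set0) :> (X * Y -> R) by rewrite set0X indic0.
exact: fin_rect_approx_rect.
Qed.

Lemma fin_rect_approxD (f g : X * Y -> R) :
  fin_rect_approx f -> fin_rect_approx g -> fin_rect_approx (f \+ g)%R.
Proof.
move=> [mf Hf] [mg Hg]; split=> [|eta eta0]; first exact: measurable_funD.
have eta20 : (0 < eta / 2)%R by rewrite divr_gt0.
have [sx1 [sy1 [h1 [sx1m sy1m Fh1 ih1 fh1]]]] := Hf _ eta20.
have [sx2 [sy2 [h2 [sx2m sy2m Fh2 ih2 gh2]]]] := Hg _ eta20.
have mh1 := F_measurable_fun_measurable (prod_sigma_seq_measurable sx1m sy1m) Fh1.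
have mh2 := F_measurable_fun_measurable (prod_sigma_seq_measurable sx2m sy2m) Fh2.
exists (sx1 ++ sx2), (sy1 ++ sy2), (h1 \+ h2)%R; split.
- by move=> A /=; rewrite mem_cat => /orP [] ?; [apply: sx1m | apply: sx2m].
- by move=> A /=; rewrite mem_cat => /orP [] ?; [apply: sy1m | apply: sy2m].
- apply: F_measurable_funD; first exact: smallest_sigma_algebra.
  + by apply: F_measurable_funS Fh1; apply: prod_sigma_seqS => A; rewrite mem_cat => ->.
  + apply: F_measurable_funS Fh2; apply: prod_sigma_seqS => A;
      by rewrite mem_cat => ->; rewrite orbT.
- have -> : EFin \o (h1 \+ h2)%R = (EFin \o h1) \+ (EFin \o h2).
    by apply/funext => x /=; rewrite EFinD.
  exact: integrableD.
- rewrite (eq_integral (fun x => `|((f x - h1 x) + (g x - h2 x))%:E|)); last first.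
    by move=> x _; rewrite /= opprD addrACA.
  apply: le_lt_trans
    (integral_abs_addr_le mu (measurable_funB mf mh1) (measurable_funB mg mh2)) _.
  by rewrite (splitr eta) EFinD lteD.
Qed.

Lemma fin_rect_approxM (c : R) (f : X * Y -> R) :
  fin_rect_approx f -> fin_rect_approx (fun x => c * f x)%R.
Proof.
move=> [mf Hf]; split=> [|eta eta0]; first exact: measurable_funM.
pose k := (`|c| + 1)%R.
have k0 : (0 < k)%R by rewrite /k ltr_wpDl.
have [sx [sy [h [sxm sym Fh ih fh]]]] := Hf _ (divr_gt0 eta0 k0).
have mh := F_measurable_fun_measurable (prod_sigma_seq_measurable sxm sym) Fh.
have mfh := measurable_fun_abse_EFin setT (measurable_funB mf mh).
exists sx, sy, (fun x => c * h x)%R; split => //.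
- exact: F_measurable_funM (smallest_sigma_algebra _ _) Fh.
- have -> : EFin \o (fun x => c * h x)%R = (fun x => c%:E * (EFin \o h) x).
    by apply/funext => x /=; rewrite EFinM.
  exact: integrableZl.
- apply: (@le_lt_trans _ _ (\int[mu]_x (k%:E * `|(f x - h x)%:E|))).
    apply: ge0_le_integral => //.
    + apply: measurableT_comp => //; apply/measurable_EFinP.
      by apply: measurable_funB; exact: measurable_funM.
    + exact: emeasurable_funM.
    + move=> x _; rewrite -mulrBr EFinM abseM; apply: lee_wpmul2r => //.
      by rewrite lee_fin lerDl.
  rewrite ge0_integralZl_EFin //; last exact: ltW.
  by rewrite -(divfK (negbT (gt_eqF k0)) eta) mulrC EFinM lte_pmul2l.
Qed.

Lemma fin_rect_approx_sum (F : nat -> X * Y -> R) n :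
  (forall k, (k < n)%N -> fin_rect_approx (F k)) ->
  fin_rect_approx (fun x => \sum_(k < n) F k x)%R.
Proof.
elim: n => [|n IH] FA.
  by under eq_fun do rewrite big_ord0; exact: fin_rect_approx0.
under eq_fun do rewrite big_ord_recr.
by apply: fin_rect_approxD; [apply: IH => k kn; apply: FA; exact: ltnW | exact: FA].
Qed.

Lemma fin_rect_approx_lim (f : X * Y -> R) : measurable_fun setT f ->
  (forall eta : R, (0 < eta)%R -> exists2 g : X * Y -> R,
    fin_rect_approx g & \int[mu]_x `|(f x - g x)%:E| < eta%:E) ->
  fin_rect_approx f.
Proof.
move=> mf approx; split=> // eta eta0.
have eta20 : (0 < eta / 2)%R by rewrite divr_gt0.
have [g [mg Hg] fg] := approx _ eta20.
have [sx [sy [h [sxm sym Fh ih gh]]]] := Hg _ eta20.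
have mh := F_measurable_fun_measurable (prod_sigma_seq_measurable sxm sym) Fh.
exists sx, sy, h; split => //.
apply: le_lt_trans (integral_abs_subr_le mu mf mg mh) _.
by rewrite (splitr eta) EFinD lteD.
Qed.

Lemma fin_rect_approx_measurable_indic (E : set (X * Y)) : measurable E ->
  fin_rect_approx (\1_E).
Proof.
move=> mE.
pose G := [set A `*` B | A in (measurable : set (set X))
                        & B in (measurable : set (set Y))].
apply: (@dynkin_induction _ _ G (fun S => fin_rect_approx (\1_S))).
- exact: measurable_prod_measurableType.
- move=> _ _ [A1 mA1 [B1 mB1 <-]] [A2 mA2 [B2 mB2 <-]]; rewrite -setXI.
  exists (A1 `&` A2); first exact: measurableI.
  by exists (B1 `&` B2) => //; exact: measurableI.
- by rewrite -setXTT; exact: fin_rect_approx_rect.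
- by move=> _ [A mA [B mB <-]]; exact: fin_rect_approx_rect.
- move=> S mS HS.
  have -> : \1_(~` S) = (\1_setT \+ (fun x => -1 * \1_S x))%R :> (X * Y -> R).
    rewrite indicT; apply/funext => x; rewrite /= !indicE in_setC.
    by case: (x \in S); rewrite /= ?mulr1 ?mulr0 ?subrr ?addr0.
  apply: fin_rect_approxD; last exact: fin_rect_approxM.
  by rewrite -setXTT; exact: fin_rect_approx_rect.
- move=> F mF tF HF; apply: fin_rect_approx_lim.
    exact/measurable_indic/bigcup_measurable.
  move=> eta eta0; have [N muN] := measure_bigcup_setD_lt mu mF eta0.
  exists (fun x => \sum_(k < N) \1_(F k) x)%R.
    by apply: (fin_rect_approx_sum (fun k => \1_(F k))) => k _; exact: HF.
  rewrite (eq_integral (fun x => (\1_(\bigcup_k F k `\` \bigcup_(k < N) F k) x)%:E)).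
    by rewrite integral_indic ?setIT //; apply: measurableD; exact: bigcup_measurable.
  move=> x _; rewrite sum_indic_trivIset // abse_EFin normr_indicB //.
  by move=> y [k _ Fky]; exists k.
- by move: mE; rewrite measurable_prod_measurableType.
Qed.

Lemma fin_rect_approx_sfun (g : {sfun (X * Y)%type >-> R}) : fin_rect_approx g.
Proof.
rewrite (funext (fimfunEord g)); set s := finmap.enum_fset _.
apply: (fin_rect_approx_sum (fun k x => s`_k * \1_(g @^-1` [set s`_k]) x)%R) => k _.
apply: fin_rect_approxM; apply: fin_rect_approx_measurable_indic.
by rewrite -[X in measurable X]setTI; exact: (measurable_funP g).
Qed.

Lemma fin_rect_approx_integrable {f : X * Y -> R} :
  mu.-integrable setT (EFin \o f) -> fin_rect_approx f.
Proof.
move=> intf; have [g_ [_ _]] := approximation_sfun_integrable measurableT intf.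
move=> /fine_cvgP[[N1 _ finN] /cvgr_dist_lt L1].
apply: fin_rect_approx_lim; first by apply/measurable_EFinP; case/integrableP: intf.
move=> eta eta0; have [N2 _ closeN] := L1 _ eta0.
pose n := maxn N1 N2.
exists (g_ n); first exact: fin_rect_approx_sfun.
have /= := closeN n (leq_maxr _ _); rewrite -(fineK (finN n (leq_maxl _ _))).
by rewrite lte_fin sub0r normrN => /(le_lt_trans (ler_norm _)).
Qed.

End rect_approximation.

Theorem corollary1 (R : realType) (d1 d2 : measure_display)
  (X : measurableType d1) (Y : measurableType d2)
  (mu nu : {finite_measure set (X * Y)%type -> \bar R})
  (f : X * Y -> R) :
  mu.-integrable setT (EFin \o f) ->
  nu `<< mu ->
  forall eps : R, 0 < eps ->
  exists (C : set (set X)) (D : set (set Y)),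
    [/\ finite_sub_sigma_algebra C, finite_sub_sigma_algebra D &
      forall F : set (set (X * Y)%type),
        sigma_algebra setT F -> prod_sigma C D `<=` F -> F `<=` measurable ->
        forall g : X * Y -> R, is_cond_exp mu F f g ->
          (nu [set z | (eps <= `|g z - f z|)%R] < eps%:E)%E].
Proof.
move=> intf numu eps eps0.
have [del del0 nu_small] := dominates_eps_delta numu eps0.
have eta0 : 0 < eps * del / 2 by rewrite divr_gt0 // mulr_gt0.
have [_ /(_ _ eta0)[sx [sy [h [sxm sym Fh inth fh]]]]] :=
  fin_rect_approx_integrable mu intf.
exists <<s [set` sx]>>, <<s [set` sy]>>.
split; [exact: finite_sub_sigma_algebra_seq | exact: finite_sub_sigma_algebra_seq |].
move=> F sF CDF Fm g cg.
have Fh' : F_measurable_fun F h := F_measurable_funS CDF Fh.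
have mgf : measurable_fun setT (g \- f).
  apply: measurable_funB; last by apply/measurable_EFinP; case/integrableP: intf.
  by case: cg => Fg _ _; exact: F_measurable_fun_measurable Fm Fg.
apply: nu_small; first exact: measurable_abs_ge.
rewrite -(@lte_pmul2l _ eps%:E) // -EFinM.
apply: le_lt_trans (markov_abs mu mgf eps0) _.
apply: le_lt_trans (cond_exp_L1_dist mu sF Fm intf cg Fh' inth) _.
by rewrite [X in (_ < X%:E)%E](splitr (eps * del)) EFinD lteD.
Qed.
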